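(* Let $X$ be a G-space and suppose there exists a hypercyclic operator $T_0\in L(X)$. Then every $A\in\Sigma(X)$ is an orbit, i.e. there exist $T\in L(X)$ and $x\in X$ with $A=O(T,x)=\{T^nx:n\in\mathbb{Z}_+\}$.
   Context: All topological vector spaces are Hausdorff, over $\mathbb{K}\in\{\mathbb{R},\mathbb{C}\}$. For a topological vector space $X$, $L(X)$ is the algebra of continuous linear operators on $X$ and $GL(X)$ is the group of invertible $T\in L(X)$ with $T^{-1}\in L(X)$. ''Countable'' means infinite countable. $\Sigma(X)$ denotes the set of all countable dense linearly independent subsets of $X$. $T\in L(X)$ is hypercyclic if there is $x\in X$ (a hypercyclic vector) whose orbit $O(T,x)=\{T^nx:n\in\mathbb{Z}_+\}$ is dense in $X$. A locally convex space $X$ is a G-space if $\Sigma(X)\neq\varnothing$ and $GL(X)$ acts transitively on $\Sigma(X)$ (i.e. for all $A,B\in\Sigma(X)$ there is $J\in GL(X)$ with $J(A)=B$). A subset $A\subseteq X$ is called an orbit if $A=O(T,x)$ for some $T\in L(X)$, $x\in X$. *)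

From Stdlib Require Import Reals List.
Open Scope R_scope.

Inductive Kind := KReal | KCplx.

Definition scal (k : Kind) : Type :=
  match k with KReal => R | KCplx => (R * R)%type end.

Definition szero (k : Kind) : scal k :=
  match k return scal k with KReal => 0 | KCplx => (0, 0) end.
Definition sone (k : Kind) : scal k :=
  match k return scal k with KReal => 1 | KCplx => (1, 0) end.
Definition sadd (k : Kind) : scal k -> scal k -> scal k :=
  match k return scal k -> scal k -> scal k with
  | KReal => Rplus
  | KCplx => fun a b => (fst a + fst b, snd a + snd b) end.
Definition sopp (k : Kind) : scal k -> scal k :=
  match k return scal k -> scal k with
  | KReal => Ropp
  | KCplx => fun a => (- fst a, - snd a) end.
Definition smul (k : Kind) : scal k -> scal k -> scal k :=
  match k return scal k -> scal k -> scal k with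
  | KReal => Rmult
  | KCplx => fun a b => (fst a * fst b - snd a * snd b,
                         fst a * snd b + snd a * fst b) end.
Definition sabs (k : Kind) : scal k -> R :=
  match k return scal k -> R with
  | KReal => Rabs
  | KCplx => fun a => sqrt (fst a * fst a + snd a * snd a) end.
Definition sofR (k : Kind) : R -> scal k :=
  match k return R -> scal k with
  | KReal => fun t => t
  | KCplx => fun t => (t, 0) end.

Record TVS (k : Kind) := {
  car :> Type;
  vadd : car -> car -> car;
  vzero : car;
  vopp : car -> car;
  vscal : scal k -> car -> car;
  vadd_assoc : forall x y z, vadd x (vadd y z) = vadd (vadd x y) z;
  vadd_comm : forall x y, vadd x y = vadd y x;
  vadd_0 : forall x, vadd x vzero = x;
  vadd_opp : forall x, vadd x (vopp x) = vzero;
  vscal_distr_v : forall (a : scal k) (x y : car), vscal a (vadd x y) = vadd (vscal a x) (vscal a y);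
  vscal_distr_s : forall (a b : scal k) (x : car), vscal (sadd k a b) x = vadd (vscal a x) (vscal b x);
  vscal_assoc : forall (a b : scal k) (x : car), vscal (smul k a b) x = vscal a (vscal b x);
  vscal_1 : forall x, vscal (sone k) x = x;
  vopen : (car -> Prop) -> Prop;
  vopen_full : vopen (fun _ => True);
  vopen_inter : forall U V, vopen U -> vopen V -> vopen (fun x => U x /\ V x);
  vopen_union : forall F : (car -> Prop) -> Prop,
      (forall U, F U -> vopen U) -> vopen (fun x => exists U, F U /\ U x);
  vhausdorff : forall x y, x <> y -> exists U V, vopen U /\ vopen V /\ U x /\ V y /\
      (forall z, ~ (U z /\ V z));
  vadd_cont : forall x y W, vopen W -> W (vadd x y) ->
      exists U V, vopen U /\ vopen V /\ U x /\ V y /\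
        (forall u v, U u -> V v -> W (vadd u v));
  vscal_cont : forall (a : scal k) (x : car) W, vopen W -> W (vscal a x) ->
      exists eps U, eps > 0 /\ vopen U /\ U x /\
        (forall (b : scal k) u, sabs k (sadd k b (sopp k a)) < eps -> U u -> W (vscal b u))
}.

Arguments vadd {k X} : rename.
Arguments vzero {k} X : rename.
Arguments vscal {k X} : rename.
Arguments vopen {k X} : rename.

Section Defs.
Context {k : Kind} (X : TVS k).

Definition convex (V : X -> Prop) : Prop :=
  forall x y t, V x -> V y -> 0 <= t <= 1 ->
    V (vadd (vscal (sofR k t) x) (vscal (sofR k (1 - t)) y)).

Definition locally_convex : Prop :=
  forall U : X -> Prop, vopen U -> U (vzero X) ->
    exists V : X -> Prop, vopen V /\ V (vzero X) /\ convex V /\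
      (forall x, V x -> U x).

Definition dense (A : X -> Prop) : Prop :=
  forall U : X -> Prop, vopen U -> (exists x, U x) -> exists x, U x /\ A x.

Definition countable_inf (A : X -> Prop) : Prop :=
  exists e : nat -> X, (forall m n, e m = e n -> m = n) /\
    (forall y, A y <-> exists n, e n = y).

Fixpoint lsum (l : list (scal k * X)) : X :=
  match l with
  | nil => vzero X
  | p :: l' => vadd (vscal (fst p) (snd p)) (lsum l')
  end.

Definition lin_indep (A : X -> Prop) : Prop :=
  forall l : list (scal k * X), NoDup (map snd l) ->
    Forall (fun p => A (snd p)) l -> lsum l = vzero X ->
    Forall (fun p => fst p = szero k) l.

Definition Sigma (A : X -> Prop) : Prop :=
  countable_inf A /\ dense A /\ lin_indep A.

Definition linear (T : X -> X) : Prop :=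
  (forall x y, T (vadd x y) = vadd (T x) (T y)) /\
  (forall a x, T (vscal a x) = vscal a (T x)).

Definition continuous (T : X -> X) : Prop :=
  forall U : X -> Prop, vopen U -> vopen (fun x => U (T x)).

Definition Lop (T : X -> X) : Prop := linear T /\ continuous T.

Definition GLop (T : X -> X) : Prop :=
  Lop T /\ exists S, Lop S /\ (forall x, S (T x) = x) /\ (forall x, T (S x) = x).

Definition orbit (T : X -> X) (x : X) : X -> Prop :=
  fun y => exists n : nat, y = Nat.iter n T x.

Definition hypercyclic (T : X -> X) : Prop :=
  Lop T /\ exists x, dense (orbit T x).

Definition image (J : X -> X) (A : X -> Prop) : X -> Prop :=
  fun y => exists x, A x /\ J x = y.

Definition G_space : Prop :=
  locally_convex /\ (exists A, Sigma A) /\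
  (forall A B, Sigma A -> Sigma B ->
     exists J, GLop J /\ forall y, image J A y <-> B y).

End Defs.

(** Let [x0] be a hypercyclic vector of [T0].  The orbit [O(T0,x0)] lies in
    [Sigma(X)]: it is dense, and it is linearly independent, since otherwise
    it would lie in the span [F] of [x0, ..., T0^(N-1) x0]; finite-dimensional
    subspaces of a Hausdorff TVS are closed, so density forces [F = X], which
    contradicts (Steinitz) the infinite independent sequence enumerating any
    element of [Sigma(X)].  Transitivity then gives [J] in [GL(X)] with
    [J(O(T0,x0)) = A], whence [A = O(J T0 J^-1, J x0)]. *)

From Pilot Require Import Defs.
From Stdlib Require Import Reals List Lra Lia FinFun.
From Stdlib Require Import Classical ClassicalEpsilon FunctionalExtensionality PropExtensionality.
From Coquelicot Require Complex.
Open Scope R_scope.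

(** Inverse in the scalar field (arbitrary at [0]). *)
Definition sinv (k : Kind) : scal k -> scal k :=
  match k return scal k -> scal k with
  | KReal => fun a => / a
  | KCplx => fun a => (fst a / (fst a * fst a + snd a * snd a),
                       - snd a / (fst a * fst a + snd a * snd a)) end.

Ltac scal_ring k :=
  destruct k; simpl in *;
  [ ring
  | repeat match goal with p : (R * R)%type |- _ => destruct p end;
    simpl; f_equal; ring ].

Section Scalars.
Variable k : Kind.
Implicit Types a b c : scal k.

Lemma sadd_0l a : sadd k (szero k) a = a.
Proof. scal_ring k. Qed.
Lemma sadd_0r a : sadd k a (szero k) = a.
Proof. scal_ring k. Qed.
Lemma sadd_opp a : sadd k a (sopp k a) = szero k.
Proof. scal_ring k. Qed.
Lemma smul_comm a b : smul k a b = smul k b a.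
Proof. scal_ring k. Qed.
Lemma smul_assoc a b c : smul k a (smul k b c) = smul k (smul k a b) c.
Proof. scal_ring k. Qed.
Lemma smul_1l a : smul k (sone k) a = a.
Proof. scal_ring k. Qed.
Lemma smul_oppl a b : smul k (sopp k a) b = sopp k (smul k a b).
Proof. scal_ring k. Qed.
Lemma smul_opp_opp a b : smul k (sopp k a) (sopp k b) = smul k a b.
Proof. scal_ring k. Qed.
Lemma sopp_opp a : sopp k (sopp k a) = a.
Proof. scal_ring k. Qed.
Lemma sopp_0 : sopp k (szero k) = szero k.
Proof. scal_ring k. Qed.

Lemma sone_neq0 : sone k <> szero k.
Proof. destruct k; simpl; intro H; [lra | injection H; lra]. Qed.

Lemma sinv_r a : a <> szero k -> smul k a (sinv k a) = sone k.
Proof.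
  destruct k; simpl; intro Ha.
  - field; auto.
  - destruct a as [x y]; simpl in *.
    assert (Hn : x * x + y * y <> 0).
    { intro E. apply Ha. assert (x = 0) by nra. assert (y = 0) by nra. subst; auto. }
    f_equal; field; auto.
Qed.

Lemma smul_inv_cancel a b : b <> szero k -> smul k (smul k a (sinv k b)) b = a.
Proof.
  intro Hb. rewrite <- smul_assoc, (smul_comm (sinv k b)), sinv_r by auto.
  rewrite smul_comm. apply smul_1l.
Qed.

Lemma sabs_C (a : scal KCplx) : sabs KCplx a = Complex.Cmod a.
Proof. unfold Complex.Cmod; simpl; f_equal; ring. Qed.

Lemma sabs_0 : sabs k (szero k) = 0.
Proof. destruct k; simpl. apply Rabs_R0. rewrite Rmult_0_l, Rplus_0_l. apply sqrt_0. Qed.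

Lemma sabs_pos a : a <> szero k -> sabs k a > 0.
Proof.
  destruct k; intro Ha.
  - apply Rabs_pos_lt. exact Ha.
  - rewrite sabs_C. apply Complex.Cmod_gt_0. exact Ha.
Qed.

Lemma sabs_triangle a b : sabs k (sadd k a b) <= sabs k a + sabs k b.
Proof. destruct k. apply Rabs_triang. rewrite !sabs_C. apply (Complex.Cmod_triangle a b). Qed.

Lemma sabs_mul a b : sabs k (smul k a b) = sabs k a * sabs k b.
Proof. destruct k. apply Rabs_mult. rewrite !sabs_C. apply (Complex.Cmod_mult a b). Qed.

Lemma sabs_opp a : sabs k (sopp k a) = sabs k a.
Proof. destruct k. apply Rabs_Ropp. rewrite !sabs_C. apply (Complex.Cmod_opp a). Qed.

Lemma sabs_inv a : a <> szero k -> sabs k (sinv k a) = / sabs k a.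
Proof.
  intro Ha. assert (E := f_equal (sabs k) (sinv_r a Ha)).
  assert (Hp := sabs_pos a Ha).
  replace (sabs k (sone k)) with 1 in E by (destruct k; [symmetry; apply Rabs_R1 | rewrite sabs_C; symmetry; apply Complex.Cmod_1]).
  rewrite sabs_mul in E. apply (Rmult_eq_reg_l (sabs k a)); [rewrite E; field|]; lra.
Qed.

Lemma sabs_sofR t : sabs k (sofR k t) = Rabs t.
Proof.
  destruct k; simpl; auto.
  replace (t * t + 0 * 0) with (Rsqr t) by (unfold Rsqr; ring). apply sqrt_Rsqr_abs.
Qed.

Lemma sdist_triangle a b c :
  sabs k (sadd k a (sopp k c)) <= sabs k (sadd k a (sopp k b)) + sabs k (sadd k b (sopp k c)).
Proof.
  replace (sadd k a (sopp k c)) with (sadd k (sadd k a (sopp k b)) (sadd k b (sopp k c)))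
    by scal_ring k.
  apply sabs_triangle.
Qed.

End Scalars.

Lemma sabs_C_components (z : scal KCplx) :
  Rabs (fst z) <= sabs KCplx z /\ Rabs (snd z) <= sabs KCplx z.
Proof.
  rewrite sabs_C. pose proof (Complex.Rmax_Cmod z) as H.
  split; eapply Rle_trans; [apply Rmax_l | exact H | apply Rmax_r | exact H].
Qed.

Lemma sabs_C_le (x y : R) : sabs KCplx (x, y) <= Rabs x + Rabs y.
Proof.
  rewrite sabs_C.
  replace (x, y) with (Complex.Cplus (x, 0) (0, y))
    by (unfold Complex.Cplus; simpl; f_equal; ring).
  eapply Rle_trans; [apply Complex.Cmod_triangle|].
  rewrite <- !sabs_C. simpl.
  replace (x * x + 0 * 0) with (Rsqr x) by (unfold Rsqr; ring).
  replace (0 * 0 + y * y) with (Rsqr y) by (unfold Rsqr; ring).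
  rewrite !sqrt_Rsqr_abs. lra.
Qed.

Lemma scal_complete k (u : nat -> scal k) :
  (forall eps, eps > 0 -> exists N, forall m n, (m >= N)%nat -> (n >= N)%nat ->
      sabs k (sadd k (u m) (sopp k (u n))) < eps) ->
  exists l, forall eps, eps > 0 -> exists N, forall n, (n >= N)%nat ->
      sabs k (sadd k (u n) (sopp k l)) < eps.
Proof.
  destruct k; intro Hc.
  - destruct (R_complete u) as [l Hl].
    { intros eps He. destruct (Hc eps He) as [N HN]. exists N. intros m n Hm Hn.
      apply HN; lia. }
    exists l. intros eps He. destruct (Hl eps He) as [N HN]. exists N. intros n Hn.
    apply HN; lia.
  - assert (Hre : Cauchy_crit (fun n => fst (u n))).
    { intros eps He. destruct (Hc eps He) as [N HN]. exists N. intros m n Hm Hn.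
      eapply Rle_lt_trans; [apply (sabs_C_components (sadd KCplx (u m) (sopp KCplx (u n))))|].
      apply HN; lia. }
    assert (Him : Cauchy_crit (fun n => snd (u n))).
    { intros eps He. destruct (Hc eps He) as [N HN]. exists N. intros m n Hm Hn.
      eapply Rle_lt_trans; [apply (sabs_C_components (sadd KCplx (u m) (sopp KCplx (u n))))|].
      apply HN; lia. }
    destruct (R_complete _ Hre) as [l1 H1]. destruct (R_complete _ Him) as [l2 H2].
    exists (l1, l2). intros eps He.
    destruct (H1 (eps / 2) ltac:(lra)) as [N1 HN1]. destruct (H2 (eps / 2) ltac:(lra)) as [N2 HN2].
    exists (N1 + N2)%nat. intros n Hn.
    specialize (HN1 n ltac:(lia)). specialize (HN2 n ltac:(lia)). unfold R_dist in *.
    eapply Rle_lt_trans; [apply sabs_C_le|]. simpl. unfold Rminus in *. lra.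
Qed.

Arguments vopp {k t} _.
Arguments vadd_assoc {k t} _ _ _.
Arguments vadd_comm {k t} _ _.
Arguments vadd_0 {k t} _.
Arguments vadd_opp {k t} _.
Arguments vscal_distr_v {k t} _ _ _.
Arguments vscal_distr_s {k t} _ _ _.
Arguments vscal_assoc {k t} _ _ _.
Arguments vscal_1 {k t} _.
Arguments vopen_inter {k t} _ _ _ _.
Arguments vopen_union {k t} _ _.
Arguments vopen_full {k t}.
Arguments vhausdorff {k t} _ _ _.
Arguments vadd_cont {k t} _ _ _ _ _.
Arguments vscal_cont {k t} _ _ _ _ _.

Section VectorAlgebra.
Context {k : Kind} {X : TVS k}.
Implicit Types x y z : X.

Lemma vadd_0l x : vadd (vzero X) x = x.
Proof. rewrite vadd_comm. apply vadd_0. Qed.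

Lemma vadd_cancel x y z : vadd x y = vadd x z -> y = z.
Proof.
  intro H. assert (E : vadd (vopp x) (vadd x y) = vadd (vopp x) (vadd x z)) by (rewrite H; auto).
  rewrite !vadd_assoc, (vadd_comm (vopp x) x), vadd_opp, !vadd_0l in E. exact E.
Qed.

Lemma vscal_0s x : vscal (szero k) x = vzero X.
Proof. apply (vadd_cancel (vscal (szero k) x)). rewrite vadd_0, <- vscal_distr_s, sadd_0l. auto. Qed.

Lemma vscal_0v a : vscal a (vzero X) = vzero X.
Proof. apply (vadd_cancel (vscal a (vzero X))). rewrite vadd_0, <- vscal_distr_v, vadd_0. auto. Qed.

Lemma vscal_opp a x : vscal (sopp k a) x = vopp (vscal a x).
Proof.
  apply (vadd_cancel (vscal a x)). rewrite vadd_opp, <- vscal_distr_s, sadd_opp, vscal_0s. auto.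
Qed.

Lemma vopp_eq x : vopp x = vscal (sopp k (sone k)) x.
Proof. rewrite vscal_opp, vscal_1. auto. Qed.

Lemma vopp_add x y : vopp (vadd x y) = vadd (vopp x) (vopp y).
Proof. rewrite !vopp_eq, vscal_distr_v. auto. Qed.

Lemma vopp_opp x : vopp (vopp x) = x.
Proof. apply (vadd_cancel (vopp x)). rewrite vadd_opp, vadd_comm, vadd_opp. auto. Qed.

Lemma vadd_sub_cancel x y : vadd (vadd x y) (vopp y) = x.
Proof. rewrite <- vadd_assoc, vadd_opp, vadd_0. auto. Qed.

Lemma vsub_add_cancel x y : vadd (vadd x (vopp y)) y = x.
Proof. rewrite <- vadd_assoc, (vadd_comm (vopp y) y), vadd_opp, vadd_0. auto. Qed.

Lemma vsub_sub_shift x y z : vadd (vadd x (vopp z)) (vopp (vadd y (vopp z))) = vadd x (vopp y).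
Proof.
  rewrite vopp_add, vopp_opp, <- vadd_assoc. f_equal.
  rewrite vadd_comm, vadd_sub_cancel. auto.
Qed.

Lemma vadd_swap x y z w : vadd (vadd x y) (vadd z w) = vadd (vadd x z) (vadd y w).
Proof. rewrite <- !vadd_assoc. f_equal. rewrite !vadd_assoc. f_equal. apply vadd_comm. Qed.

End VectorAlgebra.

Section Topology.
Context {k : Kind} {X : TVS k}.

Lemma open_of_local (S : X -> Prop) :
  (forall x, S x -> exists U, vopen U /\ U x /\ forall z, U z -> S z) -> vopen S.
Proof.
  intro H.
  replace S with (fun x => exists U, (vopen U /\ forall z, U z -> S z) /\ U x).
  - apply vopen_union. intros U [HU _]; auto.
  - apply functional_extensionality; intro x; apply propositional_extensionality; split.
    + intros [U [[_ HUS] HUx]]. auto.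
    + intro Hx. destruct (H x Hx) as [U [HU [HUx HUS]]]. exists U; auto.
Qed.

Lemma open_translate (W : X -> Prop) (a : X) : vopen W -> vopen (fun z => W (vadd z a)).
Proof.
  intro HW. apply open_of_local. intros x Hx.
  destruct (vadd_cont x a W HW Hx) as [U [V [HU [_ [HUx [HVa Hc]]]]]].
  exists U; auto.
Qed.

Lemma open_scale (W : X -> Prop) (a : scal k) : vopen W -> vopen (fun z => W (vscal a z)).
Proof.
  intro HW. apply open_of_local. intros x Hx.
  destruct (vscal_cont a x W HW Hx) as [eps [U [He [HU [HUx Hc]]]]].
  exists U. repeat split; auto. intros z Hz. apply Hc; auto.
  rewrite sadd_opp, sabs_0. auto.
Qed.

Lemma nbhd_diff (G : X -> Prop) : vopen G -> G (vzero X) ->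
  exists U, vopen U /\ U (vzero X) /\ forall u u', U u -> U u' -> G (vadd u (vopp u')).
Proof.
  intros HG H0. rewrite <- (vadd_0 (vzero X)) in H0.
  destruct (vadd_cont _ _ G HG H0) as [U1 [U2 [H1 [H2 [H1x [H2y Hc]]]]]].
  exists (fun x => U1 x /\ U2 (vopp x)). repeat split.
  - apply vopen_inter; auto.
    replace (fun x => U2 (vopp x)) with (fun x => U2 (vscal (sopp k (sone k)) x)).
    + apply open_scale; auto.
    + apply functional_extensionality; intro; rewrite vopp_eq; auto.
  - auto.
  - rewrite vopp_eq, vscal_0v. auto.
  - intros u u' [Hu _] [_ Hu']. apply Hc; auto.
Qed.

Lemma nbhd_small_scal (W : X -> Prop) : vopen W -> W (vzero X) ->
  exists eps U, eps > 0 /\ vopen U /\ U (vzero X) /\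
    forall b u, sabs k b < eps -> U u -> W (vscal b u).
Proof.
  intros HW H0. rewrite <- (vscal_0v (szero k)) in H0.
  destruct (vscal_cont _ _ W HW H0) as [eps [U [He [HU [HUx Hc]]]]].
  exists eps, U. repeat split; auto. intros b u Hb Hu. apply Hc; auto.
  rewrite sopp_0, sadd_0r. auto.
Qed.

End Topology.

Section Combinations.
Context {k : Kind} {X : TVS k}.

Fixpoint comb (n : nat) (c : nat -> scal k) (v : nat -> X) : X :=
  match n with
  | O => vzero X
  | S n => vadd (comb n c v) (vscal (c n) (v n))
  end.

Definition in_span (n : nat) (v : nat -> X) (y : X) : Prop :=
  exists c, y = comb n c v.

Definition indep (n : nat) (v : nat -> X) : Prop :=
  forall c, comb n c v = vzero X -> forall i, (i < n)%nat -> c i = szero k.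

Lemma comb_ext n (c c' : nat -> scal k) (v v' : nat -> X) :
  (forall i, (i < n)%nat -> c i = c' i /\ v i = v' i) -> comb n c v = comb n c' v'.
Proof.
  induction n; simpl; intros H; auto.
  rewrite IHn by (intros; apply H; lia). destruct (H n ltac:(lia)) as [-> ->]. auto.
Qed.

Lemma comb_add n (c d : nat -> scal k) (v : nat -> X) :
  comb n (fun i => sadd k (c i) (d i)) v = vadd (comb n c v) (comb n d v).
Proof. induction n; simpl. rewrite vadd_0; auto. rewrite IHn, vscal_distr_s. apply vadd_swap. Qed.

Lemma comb_scal n a (c : nat -> scal k) (v : nat -> X) :
  vscal a (comb n c v) = comb n (fun i => smul k a (c i)) v.
Proof. induction n; simpl. apply vscal_0v. rewrite vscal_distr_v, IHn, vscal_assoc. auto. Qed.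

Lemma comb_zero n (v : nat -> X) : comb n (fun _ => szero k) v = vzero X.
Proof. induction n; simpl; auto. rewrite IHn, vscal_0s, vadd_0. auto. Qed.

Lemma comb_delta n j a (v : nat -> X) : (j < n)%nat ->
  comb n (fun i => if Nat.eqb i j then a else szero k) v = vscal a (v j).
Proof.
  induction n; simpl; intro H; [lia|].
  destruct (Nat.eqb_spec n j).
  - subst. rewrite (comb_ext _ _ (fun _ => szero k) _ v), comb_zero, vadd_0l; auto.
    intros i Hi. destruct (Nat.eqb_spec i j); [lia | auto].
  - rewrite IHn by lia. rewrite vscal_0s, vadd_0. auto.
Qed.

Lemma comb_sub n (c d : nat -> scal k) (v : nat -> X) :
  vadd (comb n c v) (vopp (comb n d v)) = comb n (fun i => sadd k (c i) (sopp k (d i))) v.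
Proof.
  rewrite comb_add, vopp_eq, comb_scal. f_equal. apply comb_ext.
  intros; split; auto. rewrite smul_oppl, smul_1l. auto.
Qed.

Lemma comb_linear (T : X -> X) n c v : Defs.linear X T ->
  T (comb n c v) = comb n c (fun i => T (v i)).
Proof.
  intros [Ha Hs].
  assert (T0 : T (vzero X) = vzero X)
    by (rewrite <- (vscal_0s (vzero X)) at 1; rewrite Hs; apply vscal_0s).
  induction n; simpl; auto. rewrite Ha, Hs, IHn. auto.
Qed.

Lemma comb_coeff_cont n (c : nat -> scal k) (v : nat -> X) (Q : X -> Prop) :
  vopen Q -> Q (comb n c v) -> exists delta, delta > 0 /\
    forall d, (forall i, (i < n)%nat -> sabs k (sadd k (d i) (sopp k (c i))) < delta) ->
      Q (comb n d v).
Proof.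
  revert Q. induction n; simpl; intros Q HQ Hc.
  - exists 1. split; auto. lra.
  - destruct (vadd_cont _ _ Q HQ Hc) as [U1 [U2 [H1 [H2 [H1x [H2y Hcc]]]]]].
    destruct (IHn U1 H1 H1x) as [d1 [Hd1 Hd1']].
    destruct (vscal_cont _ _ U2 H2 H2y) as [eps [U [He [HU [HUx Hs]]]]].
    exists (Rmin d1 eps). split; [apply Rmin_pos; auto|].
    intros d Hd. apply Hcc.
    + apply Hd1'. intros i Hi. eapply Rlt_le_trans; [apply Hd; lia | apply Rmin_l].
    + apply Hs; auto. eapply Rlt_le_trans; [apply Hd; lia | apply Rmin_r].
Qed.

Lemma in_span_comb N (w : nat -> X) n c (f : nat -> X) :
  (forall j, (j < n)%nat -> in_span N w (f j)) -> in_span N w (comb n c f).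
Proof.
  induction n; simpl; intro H.
  - exists (fun _ => szero k). rewrite comb_zero. auto.
  - destruct IHn as [d Hd]; [intros; apply H; lia|].
    destruct (H n ltac:(lia)) as [e He].
    exists (fun i => sadd k (d i) (smul k (c n) (e i))). rewrite comb_add, <- comb_scal, Hd, He. auto.
Qed.

Lemma in_span_member N (v : nat -> X) j : (j < N)%nat -> in_span N v (v j).
Proof.
  intro Hj. exists (fun i => if Nat.eqb i j then sone k else szero k).
  rewrite comb_delta, vscal_1; auto.
Qed.

Lemma indep_pred n (v : nat -> X) : indep (S n) v -> indep n v.
Proof.
  intros H c Hc i Hi.
  set (c' := fun j => if Nat.ltb j n then c j else szero k).
  assert (E : comb (S n) c' v = vzero X).
  { simpl. unfold c' at 2. rewrite Nat.ltb_irrefl, vscal_0s, vadd_0, <- Hc.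
    apply comb_ext. intros j Hj; split; auto. unfold c'. destruct (Nat.ltb_spec j n); auto; lia. }
  specialize (H c' E i ltac:(lia)). unfold c' in H. destruct (Nat.ltb_spec i n); auto; lia.
Qed.

Lemma indep_last_not_in_span n (v : nat -> X) : indep (S n) v -> ~ in_span n v (v n).
Proof.
  intros Hind [c Hc].
  set (c' := fun j => if Nat.ltb j n then c j else sopp k (sone k)).
  assert (E : comb (S n) c' v = vzero X).
  { simpl. unfold c' at 2. rewrite Nat.ltb_irrefl, vscal_opp, vscal_1.
    rewrite (comb_ext _ _ c _ v), <- Hc; [apply vadd_opp|].
    intros j Hj; split; auto. unfold c'. destruct (Nat.ltb_spec j n); auto; lia. }
  specialize (Hind c' E n ltac:(lia)). unfold c' in Hind. rewrite Nat.ltb_irrefl in Hind.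
  apply (sone_neq0 k). rewrite <- (sopp_opp k (sone k)), Hind, sopp_0. auto.
Qed.

Lemma indep_succ n (v : nat -> X) : indep n v -> ~ in_span n v (v n) -> indep (S n) v.
Proof.
  intros H Hn c Hc i Hi. simpl in Hc.
  assert (HcN : c n = szero k).
  { apply NNPP. intro Hz. apply Hn.
    assert (E : comb n c v = vscal (sopp k (c n)) (v n)).
    { apply (vadd_cancel (vscal (c n) (v n))).
      rewrite vadd_comm, Hc, <- vscal_distr_s, sadd_opp, vscal_0s. auto. }
    exists (fun j => smul k (sopp k (sinv k (c n))) (c j)).
    rewrite <- comb_scal, E, <- vscal_assoc, smul_opp_opp, smul_comm, sinv_r, vscal_1 by auto.
    auto. }
  destruct (Nat.eq_dec i n) as [->|Hne]; auto.
  apply H; [|lia]. rewrite HcN, vscal_0s, vadd_0 in Hc. auto.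
Qed.

End Combinations.

Section Steinitz.
Context {k : Kind} {X : TVS k}.

Definition skip (m j : nat) : nat := if Nat.ltb j m then j else S j.

Lemma comb_skip n m (e : nat -> scal k) (u : nat -> X) : (m <= n)%nat ->
  comb (S n) e u =
  vadd (comb n (fun j => e (skip m j)) (fun j => u (skip m j))) (vscal (e m) (u m)).
Proof.
  induction n; intro Hm.
  - replace m with O by lia. reflexivity.
  - change (comb (S (S n)) e u) with (vadd (comb (S n) e u) (vscal (e (S n)) (u (S n)))).
    destruct (Nat.eq_dec m (S n)) as [->|Hne].
    + f_equal. apply comb_ext. intros i Hi. unfold skip. destruct (Nat.ltb_spec i (S n)); [auto | lia].
    + rewrite IHn by lia. simpl.
      replace (skip m n) with (S n) by (unfold skip; destruct (Nat.ltb_spec n m); lia).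
      rewrite <- !vadd_assoc. f_equal. apply vadd_comm.
Qed.

Fixpoint ssum (n : nat) (f : nat -> scal k) : scal k :=
  match n with O => szero k | S n => sadd k (ssum n f) (f n) end.

Lemma comb_shift n (d g : nat -> scal k) (f : nat -> X) (w : X) :
  comb n d (fun j => vadd (f j) (vscal (g j) w)) =
  vadd (comb n d f) (vscal (ssum n (fun j => smul k (d j) (g j))) w).
Proof.
  induction n; simpl. rewrite vscal_0s, vadd_0. auto.
  rewrite IHn, vscal_distr_v, vscal_distr_s, vscal_assoc. apply vadd_swap.
Qed.

Lemma indep_eliminate n m (u : nat -> X) (g : nat -> scal k) : (m <= n)%nat ->
  indep (S n) u -> indep n (fun j => vadd (u (skip m j)) (vscal (g j) (u m))).
Proof.
  intros Hm Hind d Hd.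
  set (s := ssum n (fun j => smul k (d j) (g j))).
  set (e := fun i => if Nat.ltb i m then d i else if Nat.eqb i m then s else d (pred i)).
  assert (Hed : forall j, e (skip m j) = d j).
  { intro j. unfold e, skip. destruct (Nat.ltb_spec j m).
    - destruct (Nat.ltb_spec j m); [auto | lia].
    - destruct (Nat.ltb_spec (S j) m); [lia|]. destruct (Nat.eqb_spec (S j) m); [lia | auto]. }
  assert (E : comb (S n) e u = vzero X).
  { rewrite (comb_skip n m) by auto. rewrite <- Hd, comb_shift. f_equal.
    - apply comb_ext. intros i Hi. auto.
    - unfold e. rewrite Nat.ltb_irrefl, Nat.eqb_refl. auto. }
  intros i Hi. rewrite <- Hed. apply (Hind e E).
  unfold skip. destruct (Nat.ltb_spec i m); lia.
Qed.

Lemma steinitz N : forall (b u : nat -> X), indep (S N) u ->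
  ~ (forall j, (j <= N)%nat -> in_span N b (u j)).
Proof.
  induction N; intros b u Hind Hsp.
  - destruct (Hsp O (le_n _)) as [c Hc]. simpl in Hc.
    apply (sone_neq0 k), (Hind (fun _ => sone k)) with O; [|lia].
    simpl. rewrite vadd_0l, vscal_1. auto.
  - destruct (choice (fun j C => (j <= S N)%nat -> u j = comb (S N) C b)) as [C HC].
    { intro j. destruct (Nat.le_gt_cases j (S N)) as [Hj|Hj].
      - destruct (Hsp j Hj) as [c Hc]. exists c; auto.
      - exists (fun _ => szero k). intro; lia. }
    destruct (classic (exists m, (m <= S N)%nat /\ C m N <> szero k))
      as [[m [Hm Hpiv]] | Hnopiv].
    + (* eliminate the coordinate along [b_N] using the pivot [u_m] *)
      set (g := fun j => sopp k (smul k (C (skip m j) N) (sinv k (C m N)))).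
      apply (IHN b (fun j => vadd (u (skip m j)) (vscal (g j) (u m)))).
      { apply indep_eliminate; auto. }
      intros j Hj.
      assert (Hs : (skip m j <= S N)%nat) by (unfold skip; destruct (Nat.ltb_spec j m); lia).
      exists (fun i => sadd k (C (skip m j) i) (smul k (g j) (C m i))).
      rewrite (HC _ Hs), (HC _ Hm), comb_scal, <- comb_add. simpl.
      replace (sadd k (C (skip m j) N) (smul k (g j) (C m N))) with (szero k).
      { rewrite vscal_0s, vadd_0. auto. }
      unfold g. rewrite smul_oppl, <- smul_assoc, (smul_comm k (sinv k _)), sinv_r by auto.
      rewrite smul_comm, smul_1l, sadd_opp. auto.
    + (* no pivot: [u_0, ..., u_N] already lie in the span of [b_0, ..., b_(N-1)] *)
      apply (IHN b u); [apply indep_pred; auto|].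
      intros j Hj. exists (C j). rewrite (HC j) by lia. simpl.
      replace (C j N) with (szero k); [rewrite vscal_0s, vadd_0; auto|].
      apply NNPP. intro Hn. apply Hnopiv. exists j. split; auto; lia.
Qed.

End Steinitz.

Definition inv_succ (m : nat) : R := / INR (S m).

Lemma inv_succ_pos m : inv_succ m > 0.
Proof. unfold inv_succ. apply Rinv_0_lt_compat, lt_0_INR. lia. Qed.

Lemma inv_succ_small eps : eps > 0 -> exists N, inv_succ N < eps.
Proof.
  intro He. destruct (archimed_cor1 eps He) as [N [HN HN0]]. exists N.
  eapply Rle_lt_trans; [|exact HN]. unfold inv_succ.
  apply Rinv_le_contravar; [apply lt_0_INR; lia | apply le_INR; lia].
Qed.

Lemma coeff_limits k n (c : nat -> nat -> scal k) :
  (forall i eps, (i < n)%nat -> eps > 0 -> exists N, forall m p, (m >= N)%nat -> (p >= N)%nat ->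
      sabs k (sadd k (c m i) (sopp k (c p i))) < eps) ->
  exists l : nat -> scal k, forall i eps, (i < n)%nat -> eps > 0 -> exists N, forall p, (p >= N)%nat ->
      sabs k (sadd k (c p i) (sopp k (l i))) < eps.
Proof.
  intro Hc.
  destruct (choice (fun i l => (i < n)%nat -> forall eps, eps > 0 -> exists N, forall p,
      (p >= N)%nat -> sabs k (sadd k (c p i) (sopp k l)) < eps)) as [l Hl].
  - intro i. destruct (classic (i < n)%nat) as [Hi|Hi].
    + destruct (scal_complete k (fun p => c p i)) as [l Hl]; [intros; apply Hc; auto|].
      exists l. auto.
    + exists (szero k). intro; contradiction.
  - exists l. intros i eps Hi. apply Hl; auto.
Qed.

Section FiniteDimensional.
Context {k : Kind} {X : TVS k}.

(** The coordinate functionals on the span of [v_0, ..., v_(n-1)] are continuous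
    at [0] (hence everywhere, by linearity). *)
Definition coord_cont (n : nat) (v : nat -> X) : Prop :=
  forall eps, eps > 0 -> exists G : X -> Prop, vopen G /\ G (vzero X) /\
    forall c, G (comb n c v) -> forall i, (i < n)%nat -> sabs k (c i) < eps.

Definition in_span_closure (n : nat) (v : nat -> X) (y : X) : Prop :=
  forall P : X -> Prop, vopen P -> P y -> exists c, P (comb n c v).

Definition span_closed (n : nat) (v : nat -> X) : Prop :=
  forall y, in_span_closure n v y -> in_span n v y.

Lemma coord_cont_uniform n v eps : coord_cont n v -> eps > 0 ->
  exists U, vopen U /\ U (vzero X) /\ forall c d z,
    U (vadd (comb n c v) (vopp z)) -> U (vadd (comb n d v) (vopp z)) ->
    forall i, (i < n)%nat -> sabs k (sadd k (c i) (sopp k (d i))) < eps.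
Proof.
  intros Hcoord He. destruct (Hcoord eps He) as [G [HG [HG0 HGc]]].
  destruct (nbhd_diff G HG HG0) as [U [HU [HU0 HUG]]].
  exists U. repeat split; auto. intros c d z Hc Hd.
  apply HGc. rewrite <- comb_sub, <- (vsub_sub_shift _ _ z). auto.
Qed.

Fixpoint meet_upto (U : nat -> X -> Prop) (m : nat) : X -> Prop :=
  match m with
  | O => U O
  | S m => fun x => meet_upto U m x /\ U (S m) x
  end.

Lemma meet_upto_iff U m x : meet_upto U m x <-> forall j, (j <= m)%nat -> U j x.
Proof.
  induction m; simpl; split.
  - intros H j Hj. replace j with O by lia. auto.
  - intros H. apply H; lia.
  - intros [H1 H2] j Hj. destruct (Nat.eq_dec j (S m)); [subst; auto | apply IHm; auto; lia].
  - intros H. split; [apply IHm; intros; apply H; lia | apply H; lia].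
Qed.

Lemma meet_upto_open U m : (forall j, vopen (U j)) -> vopen (meet_upto U m).
Proof. intro H. induction m; simpl; auto. apply vopen_inter; auto. Qed.

Lemma span_closure_approx n v y (U : nat -> X -> Prop) :
  in_span_closure n v y -> (forall m, vopen (U m) /\ U m (vzero X)) ->
  exists c : nat -> nat -> scal k, forall m j, (j <= m)%nat -> U j (vadd (comb n (c m) v) (vopp y)).
Proof.
  intros Hy HU.
  destruct (choice (fun m c => meet_upto U m (vadd (comb n c v) (vopp y)))) as [c Hc].
  { intro m. apply (Hy (fun z => meet_upto U m (vadd z (vopp y)))).
    - apply open_translate, meet_upto_open. intro j. apply HU.
    - rewrite vadd_opp, meet_upto_iff. intros j _. apply HU. }
  exists c. intros m j Hj. apply (proj1 (meet_upto_iff U m _) (Hc m)). auto.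
Qed.

Lemma span_closure_coeffs n v y : coord_cont n v -> in_span_closure n v y ->
  exists (U : nat -> X -> Prop) (l : nat -> scal k), (forall m, vopen (U m) /\ U m (vzero X)) /\
    forall m d, U m (vadd (comb n d v) (vopp y)) ->
      forall i, (i < n)%nat -> sabs k (sadd k (d i) (sopp k (l i))) < 2 * inv_succ m.
Proof.
  intros Hcoord Hy.
  destruct (choice (fun m U => vopen U /\ U (vzero X) /\ forall c d z,
      U (vadd (comb n c v) (vopp z)) -> U (vadd (comb n d v) (vopp z)) ->
      forall i, (i < n)%nat -> sabs k (sadd k (c i) (sopp k (d i))) < inv_succ m)) as [U HU].
  { intro m. apply coord_cont_uniform; auto. apply inv_succ_pos. }
  assert (HU0 : forall m, vopen (U m) /\ U m (vzero X)) by (intro m; split; apply HU).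
  destruct (span_closure_approx n v y U Hy HU0) as [c Hc].
  (* a combination [d] with [d - y] in [U m] is [1/(m+1)]-close to every [c p],
     [p >= m]; in particular the coefficients of [c p] form Cauchy sequences *)
  assert (Hcl : forall m p i, (m <= p)%nat -> (i < n)%nat ->
      forall d, U m (vadd (comb n d v) (vopp y)) ->
      sabs k (sadd k (d i) (sopp k (c p i))) < inv_succ m).
  { intros m p i Hmp Hi d Hd. apply (proj2 (proj2 (HU m)) d (c p) y); auto. }
  destruct (coeff_limits k n c) as [l Hl].
  { intros i eps Hi He. destruct (inv_succ_small eps He) as [N HN]. exists N. intros m p Hm Hp.
    eapply Rlt_trans; [apply (Hcl N); auto; apply Hc; lia | auto]. }
  exists U, l. split; auto. intros m d Hd i Hi.
  destruct (Hl i (inv_succ m) Hi (inv_succ_pos m)) as [N HN].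
  eapply Rle_lt_trans; [apply (sdist_triangle k _ (c (m + N)%nat i))|].
  specialize (Hcl m (m + N)%nat i ltac:(lia) Hi d Hd).
  specialize (HN (m + N)%nat ltac:(lia)). lra.
Qed.

End FiniteDimensional.

Section ClosedSpans.
Context {k : Kind} {X : TVS k}.

(** Continuity of coordinates makes the span complete, hence closed: the limit
    coefficients of a point of the closure reproduce it (by Hausdorffness). *)
Lemma span_closed_of_coord_cont n (v : nat -> X) : coord_cont n v -> span_closed n v.
Proof.
  intros Hcoord y Hy.
  destruct (span_closure_coeffs n v y Hcoord Hy) as [U [l [HU Hl]]].
  exists l. apply NNPP. intro Hne.
  destruct (vhausdorff _ _ Hne) as [P [Q [HP [HQ [HPy [HQl Hdis]]]]]].
  destruct (comb_coeff_cont n l v Q HQ HQl) as [delta [Hdel HQd]].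
  destruct (inv_succ_small (delta / 2)) as [m Hm]; [lra|].
  destruct (Hy (fun z => P z /\ U m (vadd z (vopp y)))) as [d [HPd HUd]].
  { apply vopen_inter; auto. apply open_translate, HU. }
  { split; auto. rewrite vadd_opp. apply HU. }
  apply (Hdis (comb n d v)). split; auto. apply HQd. intros i Hi.
  specialize (Hl m d HUd i Hi). lra.
Qed.

Lemma separate_from_span n (v : nat -> X) y : span_closed n v -> ~ in_span n v y ->
  exists P, vopen P /\ P y /\ forall c, ~ P (comb n c v).
Proof.
  intros Hcl Hy. apply NNPP. intro Hno. apply Hy, Hcl. intros P HP HPy.
  apply NNPP. intro Hc. apply Hno. exists P. repeat split; auto.
  intros c HPc. apply Hc. exists c. auto.
Qed.

(** If [v_n] has a neighbourhood [P] missing the span of [v_0, ..., v_(n-1)],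
    the last coordinate on the span of [v_0, ..., v_n] is continuous at [0]:
    were [|c_n| >= eps] for [x = comb c v] near [0], then [-x/c_n + v_n] would
    lie in [P] and in the span of the first [n] vectors. *)
Lemma last_coord_cont n (v : nat -> X) P :
  vopen P -> P (v n) -> (forall c, ~ P (comb n c v)) ->
  forall eps, eps > 0 -> exists G, vopen G /\ G (vzero X) /\
    forall c, G (comb (S n) c v) -> sabs k (c n) < eps.
Proof.
  intros HP HPv HPc eps He.
  assert (HP' : vopen (fun z => P (vadd z (v n)))) by (apply open_translate; auto).
  assert (HP0 : P (vadd (vzero X) (v n))) by (rewrite vadd_0l; auto).
  destruct (nbhd_small_scal _ HP' HP0) as [eps1 [U [He1 [HU [HU0 HUc]]]]].
  set (r := 2 / (eps * eps1)).
  assert (Hr : r > 0) by (unfold r; apply Rdiv_lt_0_compat; [lra | apply Rmult_lt_0_compat; auto]).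
  set (t := sofR k r).
  assert (Ht : sabs k t = r) by (unfold t; rewrite sabs_sofR; apply Rabs_right; lra).
  assert (Htz : t <> szero k) by (intro E; rewrite E, sabs_0 in Ht; lra).
  exists (fun x => U (vscal t x)). split; [apply open_scale; auto|].
  split; [rewrite vscal_0v; auto|].
  intros c Hc. apply Rnot_le_lt. intro Hge.
  assert (Hcn : c n <> szero k) by (intro E; rewrite E, sabs_0 in Hge; lra).
  set (b := sopp k (sinv k (c n))).
  assert (Hb : sabs k (smul k b (sinv k t)) < eps1).
  { unfold b. rewrite sabs_mul, sabs_opp, !sabs_inv, Ht by auto. unfold r.
    assert (Hcp : sabs k (c n) > 0) by lra.
    apply (Rmult_lt_reg_l (sabs k (c n))); auto.
    replace (sabs k (c n) * (/ sabs k (c n) * / (2 / (eps * eps1)))) with (eps * eps1 / 2)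
      by (field; lra).
    assert (eps * eps1 <= sabs k (c n) * eps1) by (apply Rmult_le_compat_r; lra). nra. }
  specialize (HUc _ _ Hb Hc). simpl in HUc.
  rewrite <- vscal_assoc, smul_inv_cancel in HUc by auto.
  apply (HPc (fun i => smul k b (c i))). rewrite <- comb_scal.
  replace (vscal b (comb n c v)) with (vadd (vscal b (comb (S n) c v)) (v n)); auto.
  simpl. rewrite vscal_distr_v, <- vscal_assoc.
  replace (smul k b (c n)) with (sopp k (sone k))
    by (unfold b; rewrite smul_oppl, smul_comm, sinv_r; auto).
  rewrite vscal_opp, vscal_1. apply vsub_add_cancel.
Qed.

Lemma drop_last_small n (v : nat -> X) G : vopen G -> G (vzero X) ->
  exists U delta, vopen U /\ U (vzero X) /\ delta > 0 /\
    forall c, U (comb (S n) c v) -> sabs k (c n) < delta -> G (comb n c v).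
Proof.
  intros HG HG0. rewrite <- (vadd_0 (vzero X)) in HG0.
  destruct (vadd_cont _ _ _ HG HG0) as [U [V [HU [HV [HU0 [HV0 HUV]]]]]].
  rewrite <- (vscal_0s (v n)) in HV0.
  destruct (vscal_cont _ _ _ HV HV0) as [delta [W [Hdel [_ [HWv HWc]]]]].
  exists U, delta. repeat split; auto. intros c Hc Hcn.
  replace (comb n c v) with (vadd (comb (S n) c v) (vscal (sopp k (c n)) (v n))).
  - apply HUV; auto. apply HWc; auto. rewrite sopp_0, sadd_0r, sabs_opp. auto.
  - simpl. rewrite vscal_opp. apply vadd_sub_cancel.
Qed.

Lemma coord_cont_succ n (v : nat -> X) P :
  coord_cont n v -> vopen P -> P (v n) -> (forall c, ~ P (comb n c v)) ->
  coord_cont (S n) v.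
Proof.
  intros Hcoord HP HPv HPc eps He.
  destruct (Hcoord eps He) as [G [HG [HG0 HGc]]].
  destruct (drop_last_small n v G HG HG0) as [U [delta [HU [HU0 [Hdel HUc]]]]].
  destruct (last_coord_cont n v P HP HPv HPc (Rmin eps delta)) as [V [HV [HV0 HVc]]].
  { apply Rmin_pos; auto. }
  exists (fun x => V x /\ U x). split; [apply vopen_inter; auto | split; auto].
  intros c [Hc1 Hc2] i Hi. specialize (HVc c Hc1).
  destruct (Nat.eq_dec i n) as [->|Hin].
  - eapply Rlt_le_trans; [exact HVc | apply Rmin_l].
  - apply HGc; [|lia]. apply HUc; auto. eapply Rlt_le_trans; [exact HVc | apply Rmin_r].
Qed.

Lemma coord_cont_of_indep n (v : nat -> X) : indep n v -> coord_cont n v.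
Proof.
  induction n; intro Hind.
  - intros eps He. exists (fun _ => True). repeat split; [apply vopen_full | intros; lia].
  - assert (Hcoord := IHn (indep_pred n v Hind)).
    destruct (separate_from_span n v (v n) (span_closed_of_coord_cont n v Hcoord)
                (indep_last_not_in_span n v Hind)) as [P [HP [HPv HPc]]].
    apply (coord_cont_succ n v P); auto.
Qed.

Corollary span_closed_of_indep n (v : nat -> X) : indep n v -> span_closed n v.
Proof. intro H. apply span_closed_of_coord_cont, coord_cont_of_indep, H. Qed.

End ClosedSpans.

Section ListSums.
Context {k : Kind} {X : TVS k}.

Lemma lsum_app (l1 l2 : list (scal k * X)) : lsum X (l1 ++ l2) = vadd (lsum X l1) (lsum X l2).
Proof. induction l1; simpl. rewrite vadd_0l; auto. rewrite IHl1, vadd_assoc. auto. Qed.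

Lemma lsum_terms n (c : nat -> scal k) (e : nat -> X) :
  lsum X (map (fun j => (c j, e j)) (seq 0 n)) = comb n c e.
Proof.
  induction n; [reflexivity|].
  rewrite seq_S, map_app, lsum_app, IHn. simpl. rewrite vadd_0. auto.
Qed.

Lemma indep_of_lin_indep (A : X -> Prop) (e : nat -> X) n :
  lin_indep X A -> (forall m p, e m = e p -> m = p) -> (forall m, A (e m)) -> indep n e.
Proof.
  intros HL Hinj HA c Hc i Hi.
  set (l := map (fun j => (c j, e j)) (seq 0 n)).
  assert (Hnd : NoDup (map snd l)).
  { unfold l. rewrite map_map. apply Injective_map_NoDup; [exact Hinj | apply seq_NoDup]. }
  assert (Hf : Forall (fun p => A (snd p)) l).
  { apply Forall_forall. intros p Hp. apply in_map_iff in Hp. destruct Hp as [j [<- _]]. apply HA. }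
  assert (Hz := HL l Hnd Hf ltac:(unfold l; rewrite lsum_terms; exact Hc)).
  rewrite Forall_forall in Hz. apply (Hz (c i, e i)).
  apply in_map_iff. exists i. split; auto. apply in_seq. lia.
Qed.

Definition coeff_at (e : nat -> X) (l : list (scal k * X)) (i : nat) : scal k :=
  fold_right (fun p s =>
    sadd k (if excluded_middle_informative (snd p = e i) then fst p else szero k) s)
    (szero k) l.

Lemma lsum_as_comb (e : nat -> X) M l : (forall m p, e m = e p -> m = p) ->
  Forall (fun p => exists j, (j < M)%nat /\ e j = snd p) l ->
  lsum X l = comb M (coeff_at e l) e.
Proof.
  intros Hinj Hl. induction Hl as [|p l [j [Hj Hej]] Hl IH]; simpl.
  - symmetry. apply comb_zero.
  - rewrite IH. unfold coeff_at at 2. simpl. rewrite comb_add. f_equal.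
    rewrite <- Hej, <- (comb_delta M j (fst p) e) by auto. apply comb_ext. intros i Hi. split; auto.
    destruct (Nat.eqb_spec i j) as [->|Hij].
    + destruct (excluded_middle_informative (e j = e j)); tauto.
    + destruct (excluded_middle_informative (e j = e i)) as [E|_]; auto.
      apply Hinj in E. lia.
Qed.

Lemma coeff_at_absent (e : nat -> X) l i : (forall q, In q l -> snd q <> e i) ->
  coeff_at e l i = szero k.
Proof.
  induction l as [|q l IH]; intro H; [reflexivity|]. unfold coeff_at; simpl.
  destruct (excluded_middle_informative (snd q = e i)) as [E|_].
  - exfalso. apply (H q); [left|]; auto.
  - rewrite sadd_0l. apply IH. intros; apply H; right; auto.
Qed.

Lemma coeff_at_member (e : nat -> X) l p i : NoDup (map snd l) -> In p l -> snd p = e i ->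
  coeff_at e l i = fst p.
Proof.
  induction l as [|q l IH]; intros Hnd Hp Hpi; [destruct Hp|].
  inversion Hnd as [|x l' Hq Hnd']; subst. unfold coeff_at; simpl. fold (coeff_at e l i).
  destruct Hp as [<-|Hp].
  - destruct (excluded_middle_informative (snd q = e i)) as [_|E]; [|contradiction].
    rewrite coeff_at_absent, sadd_0r; auto.
    intros q' Hq' E. apply Hq. rewrite Hpi, <- E. apply in_map. auto.
  - destruct (excluded_middle_informative (snd q = e i)) as [E|_].
    + exfalso. apply Hq. rewrite E, <- Hpi. apply in_map. auto.
    + rewrite sadd_0l. apply IH; auto.
Qed.

Lemma terms_in_prefix (e : nat -> X) (l : list (scal k * X)) : Forall (fun p => exists j, e j = snd p) l ->
  exists M, Forall (fun p => exists j, (j < M)%nat /\ e j = snd p) l.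
Proof.
  induction 1 as [|p l [j Hj] _ [M HM]]; [exists O; constructor|].
  exists (S (Nat.max j M)). constructor.
  - exists j. split; auto. lia.
  - eapply Forall_impl; [|exact HM]. intros q [i [Hi Hq]]. exists i. split; auto. lia.
Qed.

Lemma lin_indep_of_indep (A : X -> Prop) (e : nat -> X) :
  (forall m p, e m = e p -> m = p) -> (forall n, indep n e) ->
  (forall y, A y -> exists n, e n = y) -> lin_indep X A.
Proof.
  intros Hinj Hind HA l Hnd Hf Hs.
  destruct (terms_in_prefix e l) as [M HM].
  { eapply Forall_impl; [|exact Hf]. intros p Hp. apply HA, Hp. }
  rewrite (lsum_as_comb e M l Hinj HM) in Hs.
  rewrite Forall_forall in HM |- *. intros p Hp. destruct (HM p Hp) as [j [Hj Hej]].
  rewrite <- (coeff_at_member e l p j Hnd Hp); auto. apply (Hind M _ Hs j Hj).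
Qed.

End ListSums.

Section HypercyclicOrbits.
Context {k : Kind} {X : TVS k}.

Definition orbit_seq (T : X -> X) (x : X) (i : nat) : X := Nat.iter i T x.

Lemma orbit_in_span (T : X -> X) x N : Defs.linear X T ->
  in_span N (orbit_seq T x) (orbit_seq T x N) -> forall i, in_span N (orbit_seq T x) (orbit_seq T x i).
Proof.
  intros HT HN.
  assert (Hfirst : forall i, (i <= N)%nat -> in_span N (orbit_seq T x) (orbit_seq T x i)).
  { intros i Hi. destruct (Nat.eq_dec i N) as [->|Hne]; auto. apply in_span_member. lia. }
  induction i; [apply Hfirst; lia|].
  destruct IHi as [c Hc]. change (orbit_seq T x (S i)) with (T (orbit_seq T x i)).
  rewrite Hc, comb_linear by auto. apply in_span_comb. intros j Hj. apply (Hfirst (S j)). lia.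
Qed.

Lemma dense_in_span (D : X -> Prop) N (v : nat -> X) :
  dense X D -> span_closed N v -> (forall z, D z -> in_span N v z) -> forall y, in_span N v y.
Proof.
  intros Hd Hcl HD y. apply Hcl. intros P HP HPy.
  destruct (Hd P HP (ex_intro _ y HPy)) as [z [HPz Hz]].
  destruct (HD z Hz) as [c ->]. exists c. auto.
Qed.

Lemma hypercyclic_orbit_indep (T : X -> X) x (e : nat -> X) :
  Lop X T -> dense X (orbit X T x) -> (forall n, indep n e) -> forall N, indep N (orbit_seq T x).
Proof.
  intros [HTlin _] Hd He. induction N as [|N IH].
  - intros c _ i Hi. lia.
  - apply indep_succ; auto. intro HN.
    assert (Hfill := dense_in_span _ N _ Hd (span_closed_of_indep N _ IH)).
    apply (steinitz N (orbit_seq T x) e (He (S N))). intros j _. apply Hfill.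
    intros z [n ->]. apply (orbit_in_span T x N HTlin HN).
Qed.

Lemma indep_injective (e : nat -> X) : (forall n, indep n e) -> forall m p, e m = e p -> m = p.
Proof.
  intros Hind.
  assert (Hlt : forall m p, (m < p)%nat -> e m <> e p).
  { intros m p Hmp E. apply (indep_last_not_in_span p e (Hind (S p))).
    rewrite <- E. apply in_span_member. auto. }
  intros m p E. destruct (Nat.lt_trichotomy m p) as [H|[H|H]]; auto.
  - exfalso. apply (Hlt m p); auto.
  - exfalso. apply (Hlt p m); auto.
Qed.

Lemma Sigma_indep_seq (A : X -> Prop) : Sigma X A -> exists e : nat -> X, forall n, indep n e.
Proof.
  intros [[e [Hinj HA]] [_ HL]]. exists e. intro n.
  apply (indep_of_lin_indep A); auto. intro m. apply HA. exists m. auto.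
Qed.

Lemma hypercyclic_orbit_Sigma (T : X -> X) x :
  Lop X T -> dense X (orbit X T x) -> (exists A, Sigma X A) -> Sigma X (orbit X T x).
Proof.
  intros HT Hd [A HA]. destruct (Sigma_indep_seq A HA) as [e He].
  assert (Hind := hypercyclic_orbit_indep T x e HT Hd He).
  assert (Hinj := indep_injective _ Hind).
  split; [|split; auto].
  - exists (orbit_seq T x). split; auto.
    intro y. split; intros [n Hn]; exists n; auto.
  - apply (lin_indep_of_indep _ (orbit_seq T x) Hinj Hind).
    intros y [n ->]. exists n. auto.
Qed.

End HypercyclicOrbits.

Section Conjugation.
Context {k : Kind} {X : TVS k}.

Lemma Lop_comp (T S : X -> X) : Lop X T -> Lop X S -> Lop X (fun z => T (S z)).
Proof.
  intros [[HTa HTs] HTc] [[HSa HSs] HSc]. split; [split|].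
  - intros x y. rewrite HSa, HTa. auto.
  - intros a x. rewrite HSs, HTs. auto.
  - intros U HU. apply (HSc _ (HTc U HU)).
Qed.

Lemma image_orbit_conj (J S T : X -> X) x : (forall z, S (J z) = z) ->
  forall y, image X J (orbit X T x) y <-> orbit X (fun z => J (T (S z))) (J x) y.
Proof.
  intros HSJ.
  assert (Hiter : forall n, Nat.iter n (fun z => J (T (S z))) (J x) = J (Nat.iter n T x)).
  { induction n; simpl; auto. rewrite IHn, HSJ. auto. }
  intro y. unfold image, orbit. split.
  - intros [z [[n ->] <-]]. exists n. auto.
  - intros [n ->]. exists (Nat.iter n T x). split; [exists n|]; auto.
Qed.

End Conjugation.

Theorem lemma1p2 (k : Kind) (X : TVS k) :
  G_space X ->
  (exists T0 : X -> X, hypercyclic X T0) ->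
  forall A : X -> Prop, Sigma X A ->
    exists (T : X -> X) (x : X), Lop X T /\ (forall y, A y <-> orbit X T x y).
Proof.
  intros [_ [HSigma Htrans]] [T0 [HT0 [x0 Hdense]]] A HA.
  assert (Horb := hypercyclic_orbit_Sigma T0 x0 HT0 Hdense HSigma).
  destruct (Htrans _ _ Horb HA) as [J [[HJ [S [HS [HSJ _]]]] HJA]].
  (* A = J (O(T0, x0)) = O(J T0 J^-1, J x0) *)
  exists (fun z => J (T0 (S z))), (J x0). split.
  - apply Lop_comp; [|apply Lop_comp]; auto.
  - intro y. rewrite <- HJA. apply image_orbit_conj. auto.
Qed.
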